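(* Let $\|\cdot\|$ be a norm on $\mathbb{R}^d$ and $\Phi$ a mirror map whose Bregman divergence satisfies $\frac{m}{2}\|x-y\|^2\le D_\Phi(x,y)\le\frac{M}{2}\|x-y\|^2$ for all $x,y\in\mathbb{R}^d$ and some positive constants $m,M$; let $\kappa=M/m$. For every $\alpha>2\sqrt{\kappa-1}$ there exists a choice of $\beta$ such that Primal Online Balanced Descent (with norm $\|\cdot\|$ and mirror map $\Phi$) has competitive ratio at most $3+O(1/\alpha)$ for SOCO with switching cost $\|\cdot\|$ when all cost functions are locally $\alpha$-polyhedral.
   Context: SOCO: a convex decision set $\mathcal{X}\subseteq\mathbb{R}^d$, a norm $\|\cdot\|$ (switching cost), a starting point $x_0$, and non-negative convex cost functions $f_1,\dots,f_T$ ($f_t=+\infty$ outside $\mathcal{X}$). At round $t$ the algorithm observes $f_t$, then chooses $x_t\in\mathcal{X}$, paying $f_t(x_t)+\|x_t-x_{t-1}\|$. $\mathrm{cost}(ALG)=\sum_t f_t(x_t)+\|x_t-x_{t-1}\|$; $\mathrm{cost}(OPT)$ is the minimum of the same expression over all $(x_1,\dots,x_T)\in\mathcal{X}^T$ chosen with full knowledge. An algorithm is $C$-competitive if $\mathrm{cost}(ALG)\le C\,\mathrm{cost}(OPT)$ for all cost sequences. $D_\Phi(x,y)=\Phi(x)-\Phi(y)-\nabla\Phi(y)^T(x-y)$; $\Pi^\Phi_K(x)=\arg\min_{y\in K}D_\Phi(y,x)$. A function $f_t$ with minimizer $v_t$ is locally $\alpha$-polyhedral w.r.t. $\|\cdot\|$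 if there is $\epsilon>0$ with $f_t(x)-f_t(v_t)\ge\alpha\|x-v_t\|$ for all $x\in\mathcal{X}$ with $\|x-v_t\|\le\epsilon$. Primal Online Balanced Descent with parameter $\beta>0$: for $t=1,\dots,T$: observe $f_t$, let $v_t=\arg\min_x f_t(x)$; if $\|x_{t-1}-v_t\|<\beta f_t(v_t)$ set $x_t=v_t$; otherwise, with $K^l_t=\{x:f_t(x)\le l\}$ and $x(l)=\Pi^\Phi_{K^l_t}(x_{t-1})$, increase $l$ until $\|x(l)-x_{t-1}\|=\beta l$ and set $x_t=x(l)$. *)

From HB Require Import structures.
From mathcomp Require Import all_boot all_order all_algebra.
From mathcomp Require Import all_classical all_reals all_analysis.
Set Implicit Arguments.
Unset Strict Implicit.
Unset Printing Implicit Defensive.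
Import Order.TTheory GRing.Theory Num.Theory.
Import numFieldNormedType.Exports.
Local Open Scope ring_scope.

Section SOCO.
Variables (R : realType) (d : nat).
Local Notation vec := 'rV[R]_d.

Definition is_norm (N : vec -> R) : Prop :=
  [/\ forall x, N x = 0 -> x = 0,
      forall (a : R) x, N (a *: x) = `|a| * N x
    & forall x y, N (x + y) <= N x + N y].

Definition convex_set (X : vec -> Prop) : Prop :=
  forall x y (l : R), X x -> X y -> 0 <= l -> l <= 1 ->
    X (l *: x + (1 - l) *: y).

Definition convex_on (X : vec -> Prop) (f : vec -> R) : Prop :=
  forall x y (l : R), X x -> X y -> 0 <= l -> l <= 1 ->
    f (l *: x + (1 - l) *: y) <= l * f x + (1 - l) * f y.

(* Bregman divergence D_Phi(x,y) = Phi x - Phi y - <grad Phi(y), x - y>,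
   the last term being the differential of Phi at y applied to x - y. *)
Definition bregman (Phi : vec -> R) (x y : vec) : R :=
  Phi x - Phi y - 'd Phi y (x - y).

Definition is_minimizer (X : vec -> Prop) (f : vec -> R) (v : vec) : Prop :=
  X v /\ forall x, X x -> f v <= f x.

Definition locally_polyhedral (N : vec -> R) (X : vec -> Prop)
    (alpha : R) (f : vec -> R) : Prop :=
  exists v, is_minimizer X f v /\
    exists eps : R, 0 < eps /\
      forall x, X x -> N (x - v) <= eps -> f x - f v >= alpha * N (x - v).

Definition sublevel (X : vec -> Prop) (f : vec -> R) (l : R) : vec -> Prop :=
  fun x => X x /\ f x <= l.

Definition is_bregman_proj (Phi : vec -> R) (K : vec -> Prop) (z p : vec) :=
  K p /\ forall y, K y -> bregman Phi p z <= bregman Phi y z.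

Definition pobd_step (N : vec -> R) (Phi : vec -> R) (beta : R)
    (X : vec -> Prop) (f : vec -> R) (xprev xnext : vec) : Prop :=
  exists v, is_minimizer X f v /\
   ((N (xprev - v) < beta * f v /\ xnext = v) \/
    (beta * f v <= N (xprev - v) /\
     exists l, f v <= l /\
       is_bregman_proj Phi (sublevel X f l) xprev xnext /\
       N (xnext - xprev) = beta * l /\
       (* l is the first level reached when increasing l from f v *)
       forall l' y, f v <= l' -> l' < l ->
         is_bregman_proj Phi (sublevel X f l') xprev y ->
         N (y - xprev) <> beta * l')).

Definition pobd_trajectory (N Phi : vec -> R) (beta : R) (X : vec -> Prop)
    (x0 : vec) (T : nat) (f : nat -> vec -> R) (x : nat -> vec) : Prop :=
  x 0%N = x0 /\
  forall t, (1 <= t <= T)%N -> pobd_step N Phi beta X (f t) (x t.-1) (x t).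

Definition soco_cost (N : vec -> R) (T : nat) (f : nat -> vec -> R)
    (x : nat -> vec) : R :=
  \sum_(1 <= t < T.+1) (f t (x t) + N (x t - x t.-1)).

(* Primal OBD with parameter beta is C-competitive on all SOCO instances
   with switching cost N whose costs are locally alpha-polyhedral:
   cost(ALG) <= C * cost(y) for every comparator sequence y in X^T starting
   at x0, i.e. cost(ALG) <= C * cost(OPT). *)
Definition pobd_competitive (N Phi : vec -> R) (alpha beta C : R) : Prop :=
  forall (X : vec -> Prop) (x0 : vec) (T : nat) (f : nat -> vec -> R)
         (x : nat -> vec),
    convex_set X ->
    (forall t, (1 <= t <= T)%N ->
        convex_on X (f t) /\ (forall z, X z -> 0 <= f t z) /\
        locally_polyhedral N X alpha (f t)) ->
    pobd_trajectory N Phi beta X x0 T f x ->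
    forall y : nat -> vec, y 0%N = x0 -> (forall t, (1 <= t <= T)%N -> X (y t)) ->
      soco_cost N T f x <= C * soco_cost N T f y.

End SOCO.

From Pilot Require Import Defs.
From HB Require Import structures.
From mathcomp Require Import all_boot all_order all_algebra.
From mathcomp Require Import all_classical all_reals all_analysis.
From mathcomp Require Import lra.
Set Implicit Arguments.
Unset Strict Implicit.
Unset Printing Implicit Defensive.
Import Order.TTheory GRing.Theory Num.Theory.
Import numFieldNormedType.Exports.
Local Open Scope ring_scope.

(* With beta >= 1 + 4/alpha, Primal OBD is in fact (2 + 4/alpha)-competitive,
   by the potential 2 ||x_t - y_t|| against an arbitrary comparator y.
   Convexity turns local alpha-polyhedrality into the global sharp-minimum
   bound alpha ||x - v_t|| <= f_t(x) - f_t(v_t).  Hence y_t lies within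
   f_t(y_t)/alpha of v_t and, when OBD stops at level l, its point x_t lies
   within l/alpha of v_t; the resulting drop of the potential when OBD moves
   by beta l pays for the hitting cost l and the movement. *)

Lemma sum_le_by_potential (R : realDomainType) (T : nat) (a b P : nat -> R)
    (c : R) :
  P 0%N = 0 -> 0 <= P T ->
  (forall t, (1 <= t <= T)%N -> a t + P t - P t.-1 <= c * b t) ->
  \sum_(1 <= t < T.+1) a t <= c * \sum_(1 <= t < T.+1) b t.
Proof.
move=> P0 PT_ge0 step.
suff partial n : (n <= T)%N ->
    \sum_(1 <= t < n.+1) a t + P n <= c * \sum_(1 <= t < n.+1) b t.
  by apply: le_trans (partial T (leqnn T)); rewrite lerDl.
elim: n => [|n IHn] lenT; first by rewrite !big_geq // P0 mulr0 addr0.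
rewrite !(big_nat_recr n.+1) //= mulrDr.
have := step n.+1 lenT; have := IHn (ltnW lenT); lra.
Qed.

Section Norm.
Variables (R : realType) (d : nat) (N : 'rV[R]_d -> R).
Hypothesis normN : is_norm N.

Lemma isnorm0 : N 0 = 0.
Proof.
case: normN => _ normZ _.
by rewrite -(scale0r (0 : 'rV[R]_d)) normZ normr0 mul0r.
Qed.

Lemma isnormN x : N (- x) = N x.
Proof.
case: normN => _ normZ _.
by rewrite -scaleN1r normZ normrN normr1 mul1r.
Qed.

Lemma isnorm_distC x y : N (x - y) = N (y - x).
Proof. by rewrite -isnormN opprB. Qed.

Lemma isnorm_dist_triangle x y z : N (x - z) <= N (x - y) + N (y - z).
Proof.
case: normN => _ _ normD.
by rewrite -[x - z](subrKA y); apply: normD.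
Qed.

Lemma isnorm_ge0 x : 0 <= N x.
Proof.
have := isnorm_dist_triangle x 0 x.
rewrite subrr isnorm0 sub0r isnormN subr0; lra.
Qed.

Lemma isnorm_eq0 x : N x = 0 -> x = 0.
Proof. by case: normN => N_eq0 _ _; apply: N_eq0. Qed.

Section SharpMinimum.
Variables (X : 'rV[R]_d -> Prop) (f : 'rV[R]_d -> R) (alpha : R).
Hypotheses (convX : Defs.convex_set X) (convf : Defs.convex_on X f).

(* The segment from v to a far point x meets the eps-sphere around v at
   lam x + (1 - lam) v with lam = eps / N (x - v); by convexity the local
   bound there scales up by 1 / lam. *)
Lemma local_sharp_min_global v eps :
  is_minimizer X f v -> 0 < eps ->
  (forall x, X x -> N (x - v) <= eps -> f x - f v >= alpha * N (x - v)) ->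
  forall x, X x -> alpha * N (x - v) <= f x - f v.
Proof.
move=> [Xv _] eps_gt0 local x Xx.
have [near|far] := leP (N (x - v)) eps; first exact: local.
have Nxv_gt0 : 0 < N (x - v) by apply: lt_trans far.
pose lam := eps / N (x - v).
have lam_gt0 : 0 < lam by rewrite divr_gt0.
have lam_lt1 : lam < 1 by rewrite ltr_pdivrMr // mul1r.
pose z := lam *: x + (1 - lam) *: v.
have Xz : X z by apply: convX; rewrite ?ltW.
have Nzv : N (z - v) = eps.
  case: normN => _ normZ _.
  rewrite /z scalerBl scale1r addrCA addrAC subrr add0r -scalerBr normZ.
  by rewrite ger0_norm ?ltW // mulfVK // gt_eqF.
have fz := convf Xx Xv (ltW lam_gt0) (ltW lam_lt1).
have := local z Xz; rewrite Nzv lexx => /(_ isT) local_z.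
have scaled : alpha * eps = lam * (alpha * N (x - v)).
  by rewrite /lam mulrCA mulfVK // gt_eqF.
rewrite -(ler_pM2l lam_gt0) -scaled mulrBr; lra.
Qed.

Lemma sharp_min_unique v w : 0 < alpha ->
  is_minimizer X f v -> is_minimizer X f w ->
  (forall x, X x -> alpha * N (x - v) <= f x - f v) -> w = v.
Proof.
move=> alpha_gt0 [Xv minv] [Xw minw] sharp.
apply/eqP; rewrite -subr_eq0; apply/eqP/isnorm_eq0/eqP.
rewrite eq_le isnorm_ge0 andbT -(pmulr_rle0 _ alpha_gt0).
have := sharp w Xw; have := minw v Xv; lra.
Qed.

Lemma locally_polyhedral_sharp v : 0 < alpha ->
  locally_polyhedral N X alpha f -> is_minimizer X f v ->
  forall x, X x -> alpha * N (x - v) <= f x - f v.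
Proof.
move=> alpha_gt0 [w [minw [eps [eps_gt0 local]]]] minv.
have sharp := local_sharp_min_global minw eps_gt0 local.
by rewrite (sharp_min_unique alpha_gt0 minw minv sharp).
Qed.

End SharpMinimum.

Lemma pobd_step_cases Phi beta X f xp xn :
  pobd_step N Phi beta X f xp xn ->
  exists2 v, is_minimizer X f v &
    xn = v \/ exists l, [/\ X xn, f xn <= l & N (xn - xp) = beta * l].
Proof.
move=> [v [minv [[_ ->] | [_ [l [_ [[[Xxn fxn_le] _] [balance _]]]]]]]].
  by exists v => //; left.
by exists v => //; right; exists l.
Qed.

Section Step.
Variables (X : 'rV[R]_d -> Prop) (f : 'rV[R]_d -> R) (alpha : R).
Hypotheses (convX : Defs.convex_set X) (convf : Defs.convex_on X f).
Hypotheses (f_ge0 : forall z, X z -> 0 <= f z) (alpha_gt0 : 0 < alpha).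
Hypothesis polyf : locally_polyhedral N X alpha f.

Lemma dist_min_le v x : is_minimizer X f v -> X x ->
  N (x - v) <= f x / alpha.
Proof.
move=> minv Xx.
have := locally_polyhedral_sharp convX convf alpha_gt0 polyf minv Xx.
have := f_ge0 minv.1; rewrite ler_pdivlMr // mulrC; lra.
Qed.

Lemma pobd_step_potential_fixed Phi beta xp xn y :
  1 + 4 / alpha <= beta -> X y -> pobd_step N Phi beta X f xp xn ->
  f xn + N (xn - xp) + 2 * N (xn - y) - 2 * N (xp - y)
    <= (2 + 4 / alpha) * f y.
Proof.
move=> beta_ge Xy /pobd_step_cases[v minv step].
have yv := dist_min_le minv Xy.
have fvy := minv.2 y Xy.
have -> : (2 + 4 / alpha) * f y = 2 * f y + 4 * (f y / alpha).
  by rewrite mulrDl [f y / _]mulrC mulrA.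
have := isnorm_dist_triangle xp y v; have := isnorm_distC y v.
case: step => [-> | [l [Xxn fxn_le balance]]].
  have := isnorm_distC v xp; have := isnorm_ge0 (xp - y).
  have := isnorm_ge0 (y - v); have := f_ge0 minv.1; lra.
have xv := dist_min_le minv Xxn.
have lvl : f xn / alpha <= l / alpha by rewrite ler_pM2r ?invr_gt0.
have beta_l : (1 + 4 / alpha) * l <= beta * l.
  by rewrite ler_wpM2r // (le_trans (f_ge0 Xxn)).
rewrite mulrDl mul1r [4 / alpha * l]mulrC mulrA [l * 4]mulrC -mulrA in beta_l.
have := isnorm_dist_triangle xn v y; have := isnorm_dist_triangle xn v xp.
have := isnorm_distC v xp; have := f_ge0 Xy; lra.
Qed.

Lemma pobd_step_potential Phi beta xp xn yp yn :
  1 + 4 / alpha <= beta -> X yn -> pobd_step N Phi beta X f xp xn ->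
  f xn + N (xn - xp) + 2 * N (xn - yn) - 2 * N (xp - yp)
    <= (2 + 4 / alpha) * (f yn + N (yn - yp)).
Proof.
move=> beta_ge Xyn step.
have := pobd_step_potential_fixed beta_ge Xyn step.
have := isnorm_dist_triangle xp yp yn; have := isnorm_distC yp yn.
have : 2 * N (yn - yp) <= (2 + 4 / alpha) * N (yn - yp).
  by rewrite ler_wpM2r ?isnorm_ge0 // lerDl divr_ge0 // ltW.
rewrite mulrDr; lra.
Qed.

End Step.

Lemma pobd_competitive_ratio Phi alpha beta : 0 < alpha ->
  1 + 4 / alpha <= beta -> pobd_competitive N Phi alpha beta (2 + 4 / alpha).
Proof.
move=> alpha_gt0 beta_ge X x0 T f x convX costs [x_0 x_step] y y_0 Xy.
apply: (@sum_le_by_potential _ T _ _ (fun t => 2 * N (x t - y t))).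
- by rewrite x_0 y_0 subrr isnorm0 mulr0.
- by rewrite mulr_ge0 ?isnorm_ge0.
move=> t tT; have [convf [f_ge0 polyf]] := costs t tT.
exact: (pobd_step_potential convX convf f_ge0 alpha_gt0 polyf (y t.-1) beta_ge
  (Xy t tT) (x_step t tT)).
Qed.

End Norm.

Theorem theorem9 (R : realType) (d : nat) (N : 'rV[R]_d -> R)
    (Phi : 'rV[R]_d -> R) (m M : R) :
  is_norm N ->
  (forall x : 'rV[R]_d, differentiable Phi x) ->
  0 < m -> 0 < M ->
  (forall x y : 'rV[R]_d,
      m / 2 * N (x - y) ^+ 2 <= bregman Phi x y /\
      bregman Phi x y <= M / 2 * N (x - y) ^+ 2) ->
  let kappa := M / m in
  exists g : R -> R,
    (forall alpha : R, 2 * Num.sqrt (kappa - 1) < alpha ->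
       exists beta : R, 0 < beta /\ pobd_competitive N Phi alpha beta (g alpha))
    /\ (exists (K alpha0 : R), forall alpha : R, alpha0 <= alpha ->
          g alpha <= 3 + K / alpha).
Proof.
move=> normN _ _ _ _ kappa.
exists (fun alpha => 2 + 4 / alpha); split; last by exists 4, 1 => alpha _; lra.
move=> alpha alpha_gt; have alpha_gt0 : 0 < alpha.
  by apply: le_lt_trans alpha_gt; rewrite mulr_ge0.
exists (1 + 4 / alpha); split; last exact: pobd_competitive_ratio.
have : 0 <= 4 / alpha by rewrite divr_ge0 // ltW.
lra.
Qed.
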